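(* Let $(\mathcal{C},\otimes,I,c)$ be a strict braided monoidal category and let $V,W$ be objects of $\mathcal{C}$ such that the internal homs $\hom(V,I)$ and $\hom(W,I)$ exist. Then $$\mathrm{ev}_{V,I}\circ(\mathrm{id}_{\hom(V,I)}\otimes\mathrm{ev}_{W,I}\otimes\mathrm{id}_V)=\mathrm{ev}_{W,I}\circ(\mathrm{id}_{\hom(W,I)}\otimes\mathrm{ev}_{V,I}\otimes\mathrm{id}_W)\circ\big((c_{\hom(W,I),\hom(V,I)})^{-1}\otimes c_{W,V}\big)$$ as morphisms $\hom(V,I)\otimes\hom(W,I)\otimes W\otimes V\to I$.
   Context: For objects $U,Y$, an internal hom $\hom(U,Y)$ is an object together with a natural isomorphism $\Theta_{X,U,Y}:\operatorname{Hom}_{\mathcal{C}}(X\otimes U,Y)\to\operatorname{Hom}_{\mathcal{C}}(X,\hom(U,Y))$ (natural in $X$). The evaluation morphism is $\mathrm{ev}_{U,Y}=\Theta^{-1}_{\hom(U,Y),U,Y}(\mathrm{id}_{\hom(U,Y)}):\hom(U,Y)\otimes U\to Y$. *)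

(* Transport of a morphism along equalities of its source and target objects.
   Needed because strictness makes e.g. (A ⊗ B) ⊗ C and A ⊗ (B ⊗ C) equal
   objects only propositionally. *)
Definition castH {O : Type} (H : O -> O -> Type) {A A' B B' : O}
  (eA : A = A') (eB : B = B') (f : H A B) : H A' B' :=
  match eA in _ = A0, eB in _ = B0 return H A0 B0 with
  | eq_refl, eq_refl => f
  end.

Record SBMC := {
  ob : Type;
  hom : ob -> ob -> Type;
  idm : forall A, hom A A;
  comp : forall A B C, hom B C -> hom A B -> hom A C;
  comp_idl : forall A B (f : hom A B), comp A B B (idm B) f = f;
  comp_idr : forall A B (f : hom A B), comp A A B f (idm A) = f;
  comp_assoc : forall A B C D (f : hom A B) (g : hom B C) (h : hom C D),
    comp A C D h (comp A B C g f) = comp A B D (comp B C D h g) f;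
  tens : ob -> ob -> ob;
  tensm : forall A B C D, hom A B -> hom C D -> hom (tens A C) (tens B D);
  tensm_id : forall A B, tensm A A B B (idm A) (idm B) = idm (tens A B);
  tensm_comp : forall A B C A' B' C' (f : hom A B) (g : hom B C)
      (f' : hom A' B') (g' : hom B' C'),
    tensm A C A' C' (comp A B C g f) (comp A' B' C' g' f')
    = comp _ _ _ (tensm B C B' C' g g') (tensm A B A' B' f f');
  unit : ob;
  tens_assoc : forall A B C, tens (tens A B) C = tens A (tens B C);
  tens_unitl : forall A, tens unit A = A;
  tens_unitr : forall A, tens A unit = A;
  tensm_assoc : forall A B C A' B' C' (f : hom A A') (g : hom B B') (h : hom C C'),
    castH hom (tens_assoc A B C) (tens_assoc A' B' C')
      (tensm _ _ _ _ (tensm _ _ _ _ f g) h)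
    = tensm _ _ _ _ f (tensm _ _ _ _ g h);
  tensm_unitl : forall A B (f : hom A B),
    castH hom (tens_unitl A) (tens_unitl B) (tensm _ _ _ _ (idm unit) f) = f;
  tensm_unitr : forall A B (f : hom A B),
    castH hom (tens_unitr A) (tens_unitr B) (tensm _ _ _ _ f (idm unit)) = f;
  braid : forall A B, hom (tens A B) (tens B A);
  braid_inv : forall A B, hom (tens B A) (tens A B);
  braid_invl : forall A B, comp _ _ _ (braid_inv A B) (braid A B) = idm (tens A B);
  braid_invr : forall A B, comp _ _ _ (braid A B) (braid_inv A B) = idm (tens B A);
  braid_nat : forall A A' B B' (f : hom A A') (g : hom B B'),
    comp _ _ _ (braid A' B') (tensm _ _ _ _ f g)
    = comp _ _ _ (tensm _ _ _ _ g f) (braid A B);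
  hexagon1 : forall A B C,
    braid A (tens B C)
    = comp _ _ _
        (castH hom eq_refl (eq_sym (tens_assoc B C A))
           (tensm _ _ _ _ (idm B) (braid A C)))
        (castH hom (tens_assoc A B C) (tens_assoc B A C)
           (tensm _ _ _ _ (braid A B) (idm C)));
  hexagon2 : forall A B C,
    braid (tens A B) C
    = comp _ _ _
        (castH hom eq_refl (tens_assoc C A B)
           (tensm _ _ _ _ (braid A C) (idm B)))
        (castH hom (eq_sym (tens_assoc A B C)) (eq_sym (tens_assoc A C B))
           (tensm _ _ _ _ (idm A) (braid B C)))
}.

Arguments hom {s} _ _.
Arguments idm {s} _.
Arguments comp {s A B C} _ _.
Arguments tens {s} _ _.
Arguments tensm {s A B C D} _ _.
Arguments unit {s}.
Arguments tens_assoc {s} _ _ _.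
Arguments tens_unitl {s} _.
Arguments tens_unitr {s} _.
Arguments braid {s} _ _.
Arguments braid_inv {s} _ _.

Record IHom (C : SBMC) (U Y : ob C) := {
  ihom : ob C;
  theta : forall X, hom (tens X U) Y -> hom X ihom;
  theta_inv : forall X, hom X ihom -> hom (tens X U) Y;
  theta_invK : forall X f, theta_inv X (theta X f) = f;
  theta_K : forall X g, theta X (theta_inv X g) = g;
  theta_nat : forall X X' (g : hom X X') (f : hom (tens X' U) Y),
    theta X (comp f (tensm g (idm U))) = comp (theta X' f) g
}.

Arguments ihom {C U Y} _.
Arguments theta {C U Y} _ _ _.
Arguments theta_inv {C U Y} _ _ _.

Definition ev {C : SBMC} {U Y : ob C} (H : IHom C U Y) : hom (tens (ihom H) U) Y :=
  theta_inv H (ihom H) (idm (ihom H)).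

(* For such
   a morphism e, naturality of the braiding together with c_{I,X} = id gives
   e ⊗ id = (id ⊗ e) ∘ c and id ⊗ e = (e ⊗ id) ∘ c.  Hence the left-hand side
   equals (ev_V ⊗ ev_W) ∘ (id ⊗ c_{hom(W,I) ⊗ W, V}) and the right-hand side
   equals (ev_V ⊗ ev_W) ∘ (c_{hom(W,I), hom(V,I) ⊗ V} ⊗ id) ∘ (c^{-1} ⊗ c_{W,V});
   the two braidings agree by the hexagon axioms. *)

From Stdlib Require Import ClassicalEpsilon Eqdep.

Section Arrows.

Variable C : SBMC.

(* A morphism packaged with its endpoints: the transports [castH] forced by
   strictness become invisible ([Arrow_castH]), so equalities of objects can
   be rewritten freely. *)
Record arrow := Arrow { src : ob C; tgt : ob C; mor : hom src tgt }.
Arguments Arrow {src tgt} _.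

(* Arrows whose endpoints do not match compose to junk (namely [f]);
   every lemma about [acomp] assumes that they match. *)
Definition acomp (g f : arrow) : arrow :=
  match excluded_middle_informative (tgt f = src g) with
  | left e => Arrow (comp (mor g) (castH hom eq_refl e (mor f)))
  | right _ => f
  end.
Arguments acomp : simpl never.

Definition aid (A : ob C) : arrow := Arrow (idm A).
Definition atens (f g : arrow) : arrow := Arrow (tensm (mor f) (mor g)).
Definition abraid (A B : ob C) : arrow := Arrow (braid A B).
Definition abraid_inv (A B : ob C) : arrow := Arrow (braid_inv A B).

Lemma Arrow_inj (A B : ob C) (f g : hom A B) : Arrow f = Arrow g -> f = g.
Proof. intro e; injection e as e; do 2 apply inj_pair2 in e; exact e. Qed.

Lemma Arrow_castH (A A' B B' : ob C) (eA : A = A') (eB : B = B') (f : hom A B) :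
  Arrow (castH hom eA eB f) = Arrow f.
Proof. destruct eA, eB; reflexivity. Qed.

Lemma acomp_Arrow (A B D : ob C) (f : hom A B) (g : hom B D) :
  acomp (Arrow g) (Arrow f) = Arrow (comp g f).
Proof.
  unfold acomp; simpl.
  destruct (excluded_middle_informative (B = B)) as [e | ne].
  - rewrite (UIP_refl _ _ e); reflexivity.
  - contradiction.
Qed.

Lemma acompA (f g h : arrow) : tgt f = src g -> tgt g = src h ->
  acomp h (acomp g f) = acomp (acomp h g) f.
Proof.
  destruct f as [A B f], g as [B' D g], h as [D' E h]; simpl; intros <- <-.
  rewrite !acomp_Arrow, comp_assoc; reflexivity.
Qed.

Lemma acomp_idl (f : arrow) (X : ob C) : X = tgt f -> acomp (aid X) f = f.
Proof.
  destruct f as [A B f]; simpl; intros ->.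
  unfold aid; rewrite acomp_Arrow, comp_idl; reflexivity.
Qed.

Lemma acomp_idr (f : arrow) (X : ob C) : X = src f -> acomp f (aid X) = f.
Proof.
  destruct f as [A B f]; simpl; intros ->.
  unfold aid; rewrite acomp_Arrow, comp_idr; reflexivity.
Qed.

Lemma atens_acomp (f g f' g' : arrow) : tgt f = src g -> tgt f' = src g' ->
  atens (acomp g f) (acomp g' f') = acomp (atens g g') (atens f f').
Proof.
  destruct f as [A B f], g as [B0 D g], f' as [A' B' f'], g' as [B0' D' g'].
  simpl; intros <- <-.
  rewrite !acomp_Arrow; unfold atens; simpl.
  rewrite acomp_Arrow, tensm_comp; reflexivity.
Qed.

Lemma atens_id (A B : ob C) : atens (aid A) (aid B) = aid (tens A B).
Proof. unfold atens, aid; simpl; rewrite tensm_id; reflexivity. Qed.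

Lemma atensA (f g h : arrow) : atens (atens f g) h = atens f (atens g h).
Proof.
  unfold atens; simpl.
  rewrite <- tensm_assoc, Arrow_castH; reflexivity.
Qed.

Lemma atens_unitl (f : arrow) : atens (aid unit) f = f.
Proof.
  destruct f as [A B f]; unfold atens, aid; simpl.
  rewrite <- (Arrow_castH _ _ _ _ (tens_unitl A) (tens_unitl B)), tensm_unitl.
  reflexivity.
Qed.

Lemma atens_unitr (f : arrow) : atens f (aid unit) = f.
Proof.
  destruct f as [A B f]; unfold atens, aid; simpl.
  rewrite <- (Arrow_castH _ _ _ _ (tens_unitr A) (tens_unitr B)), tensm_unitr.
  reflexivity.
Qed.

Lemma abraid_nat (f g : arrow) :
  acomp (abraid (tgt f) (tgt g)) (atens f g)
  = acomp (atens g f) (abraid (src f) (src g)).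
Proof.
  destruct f, g; unfold atens, abraid; simpl.
  rewrite !acomp_Arrow, braid_nat; reflexivity.
Qed.

Lemma abraid_invl (A B : ob C) :
  acomp (abraid_inv A B) (abraid A B) = aid (tens A B).
Proof. unfold abraid_inv, abraid; rewrite acomp_Arrow, braid_invl; reflexivity. Qed.

Lemma abraid_invr (A B : ob C) :
  acomp (abraid A B) (abraid_inv A B) = aid (tens B A).
Proof. unfold abraid_inv, abraid; rewrite acomp_Arrow, braid_invr; reflexivity. Qed.

Lemma abraid_hexagon1 (A B D : ob C) :
  abraid A (tens B D)
  = acomp (atens (aid B) (abraid A D)) (atens (abraid A B) (aid D)).
Proof. unfold abraid at 1; rewrite hexagon1, <- acomp_Arrow, !Arrow_castH; reflexivity. Qed.

Lemma abraid_hexagon2 (A B D : ob C) :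
  abraid (tens A B) D
  = acomp (atens (abraid A D) (aid B)) (atens (aid A) (abraid B D)).
Proof. unfold abraid at 1; rewrite hexagon2, <- acomp_Arrow, !Arrow_castH; reflexivity. Qed.

Ltac endpoints :=
  solve [repeat (simpl; first
    [ reflexivity
    | assumption
    | rewrite !tens_assoc
    | rewrite !tens_unitl
    | rewrite !tens_unitr ])].

Lemma idempotent_retraction_id (c r : arrow) (A : ob C) :
  src c = A -> tgt c = A -> src r = A ->
  acomp c c = c -> acomp r c = aid A -> c = aid A.
Proof.
  intros sc tc sr cc rc.
  rewrite <- rc.
  transitivity (acomp (acomp r c) c).
  - rewrite rc; symmetry; apply acomp_idl; congruence.
  - rewrite <- acompA, cc by congruence; reflexivity.
Qed.

Lemma abraid_unitr (A : ob C) : abraid A unit = aid A.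
Proof.
  apply (idempotent_retraction_id _ (abraid_inv A unit)); simpl;
    rewrite ?tens_unitl, ?tens_unitr; try reflexivity.
  - pose proof (abraid_hexagon1 A unit unit) as hex.
    rewrite atens_unitl, atens_unitr, tens_unitl in hex; symmetry; exact hex.
  - rewrite abraid_invl, tens_unitr; reflexivity.
Qed.

Lemma abraid_unitl (A : ob C) : abraid unit A = aid A.
Proof.
  apply (idempotent_retraction_id _ (abraid_inv unit A)); simpl;
    rewrite ?tens_unitl, ?tens_unitr; try reflexivity.
  - pose proof (abraid_hexagon2 unit unit A) as hex.
    rewrite atens_unitl, atens_unitr, tens_unitl in hex; symmetry; exact hex.
  - rewrite abraid_invl, tens_unitl; reflexivity.
Qed.

Lemma atens_id_acomp (A : ob C) (f g : arrow) : tgt f = src g ->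
  atens (aid A) (acomp g f) = acomp (atens (aid A) g) (atens (aid A) f).
Proof.
  intro fg; rewrite <- atens_acomp by endpoints.
  rewrite acomp_idl by reflexivity; reflexivity.
Qed.

Lemma atens_acomp_id (A : ob C) (f g : arrow) : tgt f = src g ->
  atens (acomp g f) (aid A) = acomp (atens g (aid A)) (atens f (aid A)).
Proof.
  intro fg; rewrite <- atens_acomp by endpoints.
  rewrite acomp_idl by reflexivity; reflexivity.
Qed.

Lemma atens_to_unit_id (A Y : ob C) (f : hom A unit) :
  atens (Arrow f) (aid Y) = acomp (atens (aid Y) (Arrow f)) (abraid A Y).
Proof.
  pose proof (abraid_nat (Arrow f) (aid Y)) as nat; simpl in nat.
  rewrite abraid_unitl, acomp_idl in nat by endpoints; exact nat.
Qed.

Lemma atens_id_to_unit (A Y : ob C) (f : hom A unit) :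
  atens (aid Y) (Arrow f) = acomp (atens (Arrow f) (aid Y)) (abraid Y A).
Proof.
  pose proof (abraid_nat (aid Y) (Arrow f)) as nat; simpl in nat.
  rewrite abraid_unitr, acomp_idl in nat by endpoints; exact nat.
Qed.

Lemma atens_to_unit_l (A : ob C) (f : hom A unit) (g : arrow) :
  atens (Arrow f) g = acomp g (atens (Arrow f) (aid (src g))).
Proof.
  transitivity (atens (acomp (aid unit) (Arrow f)) (acomp g (aid (src g)))).
  - rewrite acomp_idl, acomp_idr by reflexivity; reflexivity.
  - rewrite atens_acomp, atens_unitl by reflexivity; reflexivity.
Qed.

Lemma atens_to_unit_r (B : ob C) (f : arrow) (g : hom B unit) :
  atens f (Arrow g) = acomp f (atens (aid (src f)) (Arrow g)).
Proof.
  transitivity (atens (acomp f (aid (src f))) (acomp (aid unit) (Arrow g))).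
  - rewrite acomp_idl, acomp_idr by reflexivity; reflexivity.
  - rewrite atens_acomp, atens_unitr by reflexivity; reflexivity.
Qed.

Lemma atens_id_braid_rearrange (a b v w : ob C) :
  atens (aid a) (abraid (tens b w) v)
  = acomp (atens (abraid b (tens a v)) (aid w))
      (atens (abraid_inv b a) (abraid w v)).
Proof.
  rewrite abraid_hexagon2, atens_id_acomp by endpoints.
  rewrite abraid_hexagon1, atens_acomp_id, <- acompA by endpoints.
  rewrite atensA; f_equal.
  rewrite atensA, atens_id, <- atens_acomp, abraid_invr, acomp_idl by endpoints.
  rewrite <- atens_id, atensA; reflexivity.
Qed.

Lemma acomp_to_unit_exchange (a b v w : ob C)
    (f : hom (tens a v) unit) (g : hom (tens b w) unit) :
  acomp (Arrow f) (atens (aid a) (atens (Arrow g) (aid v)))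
  = acomp (Arrow g)
      (acomp (atens (aid b) (atens (Arrow f) (aid w)))
         (atens (abraid_inv b a) (abraid w v))).
Proof.
  transitivity (acomp (atens (Arrow f) (Arrow g)) (atens (aid a) (abraid (tens b w) v))).
  - rewrite atens_to_unit_id, atens_id_acomp by endpoints.
    rewrite <- (atensA (aid a)), atens_id, acompA, <- atens_to_unit_r by endpoints.
    reflexivity.
  - rewrite atens_id_braid_rearrange, !acompA by endpoints; f_equal.
    rewrite <- (atensA (aid b)), atens_id_to_unit, atens_acomp_id, acompA by endpoints.
    rewrite atensA, atens_id, <- atens_to_unit_l by endpoints.
    reflexivity.
Qed.

End Arrows.

Theorem lemma3p23 (C : SBMC) (V W : ob C)
    (HV : IHom C V unit) (HW : IHom C W unit) :
  comp (ev HV)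
    (castH hom (f_equal (tens (ihom HV)) (tens_assoc (ihom HW) W V))
               (f_equal (tens (ihom HV)) (tens_unitl V))
       (tensm (idm (ihom HV)) (tensm (ev HW) (idm V))))
  =
  castH hom (tens_assoc (ihom HV) (ihom HW) (tens W V)) eq_refl
    (comp (ev HW)
      (comp
        (castH hom
           (eq_trans (f_equal (tens (ihom HW)) (tens_assoc (ihom HV) V W))
                     (eq_sym (tens_assoc (ihom HW) (ihom HV) (tens V W))))
           (f_equal (tens (ihom HW)) (tens_unitl W))
           (tensm (idm (ihom HW)) (tensm (ev HV) (idm W))))
        (tensm (braid_inv (ihom HW) (ihom HV)) (braid W V)))).
Proof.
  apply Arrow_inj.
  repeat first [rewrite Arrow_castH | rewrite <- acomp_Arrow].
  exact (acomp_to_unit_exchange C _ _ _ _ (ev HV) (ev HW)).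
Qed.
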